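(* Let $\langle S,L,\tau,\ell\rangle$ be a labelled Markov chain and $P\in\mathcal{P}_\tau$ an $S^2_\Delta$-closed policy. If $C$ is a closed communication class of the Markov chain $\langle S\times S,P\rangle$, then either $C=\{(s,t)\}$ for some $(s,t)\in S^2_1$, or $C\subseteq S^2_\Delta$, or $C\subseteq S^2_{0,\tau}$.
   Context: Labelled Markov chain: finite $S$, finite $L$, $\tau:S\to\mathcal{D}(S)$, $\ell:S\to L$. $\Omega(\mu,\nu)$ = couplings. $S^2_\Delta=\{(s,s)\}$, $S^2_1=\{(s,t)\mid\ell(s)\ne\ell(t)\}$, $S^2_{0,\tau}=\{(s,t)\mid s\ne t,\ s\sim t\}$ where $\sim$ is probabilistic bisimilarity (the union of all equivalence relations $R$ such that for $(s,t)\in R$, $\ell(s)=\ell(t)$ and some $\omega\in\Omega(\tau(s),\tau(t))$ has support in $R$). $\mathcal{P}_\tau$ = policies $P:S\times S\to\mathcal{D}(S\times S)$ with $P(s,t)\in\Omega(\tau(s),\tau(t))$ for $(s,t)\notin S^2_1$ and $P(s,t)$ the point mass at $(s,t)$ for $(s,t)\in S^2_1$. $P$ is $S^2_\Delta$-closed if $\mathrm{support}(P(s,s))\subseteq S^2_\Delta$ for all $s$. A communication class is an equivalence class of mutual reachability in $\langle S\times S,P\rangle$; it is closed if it cannot be left with positive probability. *)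

From HB Require Import structures.
From mathcomp Require Import all_boot all_order all_algebra.
From mathcomp Require Import reals.
Set Implicit Arguments. Unset Strict Implicit. Unset Printing Implicit Defensive.
Import Order.TTheory GRing.Theory Num.Theory.
Local Open Scope ring_scope.

Section LMC.
Variable R : realType.

Definition is_distr (T : finType) (d : {ffun T -> R}) : Prop :=
  (forall x, 0 <= d x) /\ \sum_(x : T) d x = 1.

Definition dirac (T : finType) (x : T) : {ffun T -> R} :=
  [ffun y => (y == x)%:R].

Definition supp (T : finType) (d : {ffun T -> R}) : {set T} :=
  [set x | d x != 0].

Variables (S L : finType).

Definition coupling (mu nu : {ffun S -> R}) (w : {ffun S * S -> R}) : Prop :=
  is_distr w /\
  (forall s, \sum_(t : S) w (s, t) = mu s) /\
  (forall t, \sum_(s : S) w (s, t) = nu t).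

Variables (tau : S -> {ffun S -> R}) (ell : S -> L).

Definition is_LMC : Prop := forall s, is_distr (tau s).

Definition bisimulation (Rel : rel S) : Prop :=
  equivalence_rel Rel /\
  forall s t, Rel s t ->
    ell s = ell t /\
    exists w, coupling (tau s) (tau t) w /\ supp w \subset [set p | Rel p.1 p.2].

Definition bisimilar (s t : S) : Prop :=
  exists Rel : rel S, bisimulation Rel /\ Rel s t.

Definition S2_Delta : {set S * S} := [set p | p.1 == p.2].
Definition S2_1 : {set S * S} := [set p | ell p.1 != ell p.2].
Definition in_S2_0 (p : S * S) : Prop := p.1 != p.2 /\ bisimilar p.1 p.2.

Definition is_policy (P : S * S -> {ffun S * S -> R}) : Prop :=
  forall p : S * S,
    (p \notin S2_1 -> coupling (tau p.1) (tau p.2) (P p)) /\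
    (p \in S2_1 -> P p = dirac p).

Definition Delta_closed (P : S * S -> {ffun S * S -> R}) : Prop :=
  forall s : S, supp (P (s, s)) \subset S2_Delta.

Definition edge (P : S * S -> {ffun S * S -> R}) : rel (S * S) :=
  fun p q => P p q != 0.

Definition comm_class (P : S * S -> {ffun S * S -> R}) (C : {set S * S}) : Prop :=
  exists p, C = [set q | connect (edge P) p q && connect (edge P) q p].

Definition closed_class (P : S * S -> {ffun S * S -> R}) (C : {set S * S}) : Prop :=
  comm_class P C /\ forall p q, p \in C -> edge P p q -> q \in C.

End LMC.

(** A pair
    of S^2_1 is absorbing, so a class meeting S^2_1 is that single pair; by
    S^2_Delta-closedness a class meeting S^2_Delta stays inside it.  Otherwise
    no pair of C is in S^2_1, so both components of every pair carry the same
    label, and each coupling P(s,t) is supported by C.  Let ~ be the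
    equivalence generated by the pairs of C: the marginals of P(s,t) then give
    tau s and tau t the same mass on every ~-class, and two distributions that
    agree on the classes of an equivalence admit a coupling supported by it
    (distribute mu(s) nu(t) / m proportionally inside each class of mass m).
    Hence ~ is a bisimulation. *)
From HB Require Import structures.
From mathcomp Require Import all_boot all_order all_algebra.
From mathcomp Require Import reals.
Import Order.TTheory GRing.Theory Num.Theory.
Local Open Scope ring_scope.

Lemma connect_rel_ind (T : finType) (e : rel T) (Q : T -> T -> Prop) x y :
  (forall a, Q a a) -> (forall a b c, Q a b -> Q b c -> Q a c) ->
  (forall a b, e a b -> Q a b) -> connect e x y -> Q x y.
Proof.
move=> Qrefl Qtrans subeQ /connectP [p ep ->] {y}.
elim: p x ep => [|z p IHp] x //= /andP [exz ep].
exact: Qtrans (subeQ _ _ exz) (IHp _ ep).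
Qed.

Lemma connect_forward_closed {T : finType} {e : rel T} (A : pred T) {x y} :
  (forall a b, A a -> e a b -> A b) -> connect e x y -> A x -> A y.
Proof.
move=> closedA; apply: (@connect_rel_ind _ e (fun a b => A a -> A b)) => //.
- by move=> a b c Aab Abc /Aab.
- by move=> a b eab /closedA; apply.
Qed.

Definition class_balanced {R : realType} {S : finType} (Rel : rel S)
    (mu nu : {ffun S -> R}) : Prop :=
  forall u, \sum_(x | Rel u x) mu x = \sum_(x | Rel u x) nu x.

Lemma equivalence_rel_sym {T : Type} {e : rel T} :
  equivalence_rel e -> symmetric e.
Proof.
move=> /equivalence_relP [e_refl e_trans] a b.
by apply/idP/idP => eab; rewrite -(e_trans _ _ eab) e_refl.
Qed.

Section Couplings.
Variables (R : realType) (S : finType).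

Lemma coupling_mass_eq (mu nu : {ffun S -> R}) (w : {ffun S * S -> R})
    (A : pred S) :
  coupling mu nu w -> (forall x y, w (x, y) != 0 -> A x = A y) ->
  \sum_(x | A x) mu x = \sum_(x | A x) nu x.
Proof.
move=> [_ [marg1 marg2]] wA.
have row_sum x : A x -> mu x = \sum_(y | A y) w (x, y).
  move=> Ax; rewrite -marg1 [RHS]big_mkcond; apply: eq_bigr => y _.
  by case: ifP => // Ay; have [//|/wA] := eqVneq (w (x, y)) 0; rewrite Ax Ay.
have col_sum y : A y -> nu y = \sum_(x | A x) w (x, y).
  move=> Ay; rewrite -marg2 [RHS]big_mkcond; apply: eq_bigr => x _.
  by case: ifP => // Ax; have [//|/wA] := eqVneq (w (x, y)) 0; rewrite Ax Ay.
rewrite (eq_bigr _ row_sum) (eq_bigr _ col_sum).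
exact: exchange_big.
Qed.

Lemma coupling_class_balanced (Rel : rel S) (mu nu : {ffun S -> R})
    (w : {ffun S * S -> R}) :
  equivalence_rel Rel -> coupling mu nu w ->
  (forall x y, w (x, y) != 0 -> Rel x y) -> class_balanced Rel mu nu.
Proof.
move=> Rel_equiv w_coupling w_Rel u.
apply: coupling_mass_eq w_coupling _ => x y /w_Rel xy.
have /equivalence_relP [_ Rel_trans] := Rel_equiv.
by rewrite ![Rel u _](equivalence_rel_sym Rel_equiv) (Rel_trans _ _ xy).
Qed.

Variables (Rel : rel S) (mu nu : {ffun S -> R}).
Hypotheses (Rel_equiv : equivalence_rel Rel)
  (mu_distr : is_distr mu) (nu_distr : is_distr nu)
  (class_mass_eq : class_balanced Rel mu nu).

Definition class_mass (u : S) : R := \sum_(x | Rel u x) mu x.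

Definition class_coupling : {ffun S * S -> R} :=
  [ffun p => if Rel p.1 p.2 then mu p.1 * nu p.2 / class_mass p.1 else 0].

Let Rel_refl : reflexive Rel.
Proof. by have /equivalence_relP [] := Rel_equiv. Qed.

Let Rel_sym : symmetric Rel := equivalence_rel_sym Rel_equiv.

Lemma class_mass_Rel a b : Rel a b -> class_mass a = class_mass b.
Proof.
have /equivalence_relP [_ Rt] := Rel_equiv.
by move=> ab; apply: eq_bigl => x; rewrite (Rt _ _ ab).
Qed.

Lemma class_mass_ge_mu u : mu u <= class_mass u.
Proof.
have [mu_ge0 _] := mu_distr.
by rewrite /class_mass (bigD1 u) //= lerDl sumr_ge0.
Qed.

Lemma class_mass_ge_nu u : nu u <= class_mass u.
Proof.
have [nu_ge0 _] := nu_distr.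
by rewrite /class_mass class_mass_eq (bigD1 u) //= lerDl sumr_ge0.
Qed.

(* If the class of [u] has mass 0 then so do [mu u] and [nu u], so the junk
   value [x / 0 = 0] is harmless. *)
Lemma class_mass0 {d : {ffun S -> R}} {u} :
  is_distr d -> d u <= class_mass u -> class_mass u = 0 -> d u = 0.
Proof. by move=> [d_ge0 _] le_du m0; apply/eqP; rewrite eq_le d_ge0 -m0 le_du. Qed.

Lemma class_coupling_marg1 s : \sum_t class_coupling (s, t) = mu s.
Proof.
rewrite (eq_bigr (fun t => if Rel s t then mu s / class_mass s * nu t else 0));
  last by move=> t _; rewrite ffunE /= mulrAC.
rewrite -big_mkcond /= -big_distrr /= -class_mass_eq -/(class_mass s).
have [m0|m_neq0] := eqVneq (class_mass s) 0; last by rewrite divfK.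
by rewrite m0 mulr0 (class_mass0 mu_distr (class_mass_ge_mu s)).
Qed.

Lemma class_coupling_marg2 t : \sum_s class_coupling (s, t) = nu t.
Proof.
rewrite (eq_bigr (fun s => if Rel s t then mu s * (nu t / class_mass t) else 0));
  last by move=> s _; rewrite ffunE /=; case: ifP => // /class_mass_Rel ->; rewrite mulrA.
rewrite -big_mkcond /= -big_distrl /=.
rewrite (eq_bigl (Rel t)) -/(class_mass t); last by move=> x; rewrite Rel_sym.
have [m0|m_neq0] := eqVneq (class_mass t) 0; last by rewrite mulrC divfK.
by rewrite m0 mul0r (class_mass0 nu_distr (class_mass_ge_nu t)).
Qed.

Lemma class_coupling_is_coupling : coupling mu nu class_coupling.
Proof.
have [[mu_ge0 mu_sum1] [nu_ge0 _]] := (mu_distr, nu_distr).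
split; last by split; [exact: class_coupling_marg1 | exact: class_coupling_marg2].
split=> [p|].
  by rewrite ffunE; case: ifP => // _; rewrite divr_ge0 ?mulr_ge0 ?sumr_ge0.
rewrite -mu_sum1 (eq_bigr (fun p => class_coupling (p.1, p.2))); last by case.
rewrite -(pair_bigA _ (fun a b => class_coupling (a, b))) /=.
by apply: eq_bigr => s _; rewrite class_coupling_marg1.
Qed.

Lemma supp_class_coupling : supp class_coupling \subset [set p | Rel p.1 p.2].
Proof. by apply/subsetP => p; rewrite !inE ffunE; case: ifP; rewrite ?eqxx. Qed.

Lemma class_balanced_coupling :
  exists w, coupling mu nu w /\ supp w \subset [set p | Rel p.1 p.2].
Proof.
exists class_coupling; split; last exact: supp_class_coupling.
exact: class_coupling_is_coupling.
Qed.

End Couplings.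

Section ClosedClasses.
Context {R : realType} {S L : finType}.
Context {tau : S -> {ffun S -> R}} {ell : S -> L} {P : S * S -> {ffun S * S -> R}}.
Hypotheses (tau_LMC : is_LMC tau) (P_policy : is_policy tau ell P).

Lemma S2_1_absorbing {p q : S * S} : p \in S2_1 ell -> connect (edge P) p q -> q = p.
Proof.
move=> p1 pq; apply/eqP; apply: (connect_forward_closed (pred1 p) _ pq) => //=.
move=> a b /eqP ->; rewrite /edge (proj2 (P_policy p) p1) ffunE.
by case: (b == p); rewrite ?eqxx.
Qed.

Lemma S2_Delta_absorbing {p q : S * S} :
  Delta_closed P -> p \in S2_Delta S -> connect (edge P) p q -> q \in S2_Delta S.
Proof.
move=> P_Delta pD pq; apply: (connect_forward_closed [in S2_Delta S] _ pq) => //.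
by move=> [a a'] b; rewrite inE /= => /eqP <- ab; apply: (subsetP (P_Delta a)); rewrite inE.
Qed.

Lemma comm_class_connect {C p q} :
  comm_class P C -> p \in C -> q \in C -> connect (edge P) p q.
Proof.
move=> [r ->]; rewrite !inE => /andP [_ pr] /andP [rq _].
exact: connect_trans pr rq.
Qed.

Context {C : {set S * S}}.
Hypothesis C_closed : forall p q, p \in C -> edge P p q -> q \in C.
Hypothesis C_notS2_1 : forall p, p \in C -> p \notin S2_1 ell.

Definition pair_rel : rel S := fun x y => ((x, y) \in C) || ((y, x) \in C).

Lemma pair_rel_connect_sym : connect_sym pair_rel.
Proof. by apply: sym_connect_sym => x y; rewrite /pair_rel orbC. Qed.

Lemma pair_rel_connect_equiv : equivalence_rel (connect pair_rel).
Proof.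
apply/equivalence_relP; split; first exact: connect0.
exact: same_connect pair_rel_connect_sym.
Qed.

Lemma closed_pair_balanced {q} : q \in C ->
  ell q.1 = ell q.2 /\ class_balanced (connect pair_rel) (tau q.1) (tau q.2).
Proof.
move=> qC; split; first by move: (C_notS2_1 _ qC); rewrite inE negbK => /eqP.
have [w_coupling _] := P_policy q.
apply: coupling_class_balanced pair_rel_connect_equiv (w_coupling (C_notS2_1 _ qC)) _.
by move=> x y /(C_closed _ _ qC) xyC; apply: connect1; rewrite /pair_rel xyC.
Qed.

Lemma connect_pair_balanced s t : connect pair_rel s t ->
  ell s = ell t /\ class_balanced (connect pair_rel) (tau s) (tau t).
Proof.
pose Q a b := ell a = ell b /\ class_balanced (connect pair_rel) (tau a) (tau b).
apply: (@connect_rel_ind _ _ Q)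
  => [a | a b c [lab bal_ab] [lbc bal_bc] | a b /orP [abC | baC]].
- by [].
- by split=> [|u]; [rewrite lab | rewrite bal_ab].
- by move: (closed_pair_balanced abC).
- by have [lba bal_ba] := closed_pair_balanced baC; split=> [|u]; rewrite ?lba ?bal_ba.
Qed.

Lemma pair_rel_bisimulation : bisimulation tau ell (connect pair_rel).
Proof.
split=> [|s t /connect_pair_balanced [lst bal_st]]; first exact: pair_rel_connect_equiv.
split=> //.
exact: class_balanced_coupling pair_rel_connect_equiv (tau_LMC s) (tau_LMC t) bal_st.
Qed.

Lemma closed_set_bisimilar p : p \in C -> bisimilar tau ell p.1 p.2.
Proof.
move=> pC; exists (connect pair_rel); split; first exact: pair_rel_bisimulation.
by apply: connect1; rewrite /pair_rel -surjective_pairing pC.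
Qed.

End ClosedClasses.

Theorem mainTheorem15 (R : realType) (S L : finType)
  (tau : S -> {ffun S -> R}) (ell : S -> L)
  (P : S * S -> {ffun S * S -> R}) (C : {set S * S}) :
  is_LMC tau ->
  is_policy tau ell P ->
  Delta_closed P ->
  closed_class P C ->
  (exists p, p \in S2_1 ell /\ C = [set p]) \/
  C \subset S2_Delta S \/
  (forall p, p \in C -> in_S2_0 tau ell p).
Proof.
move=> tau_LMC P_policy P_Delta [C_comm C_closed].
have [p /andP [pC p1] | C_notS2_1] := pickP [pred p | (p \in C) && (p \in S2_1 ell)].
  left; exists p; split=> //; apply/setP => q; rewrite inE.
  apply/idP/eqP => [qC | -> //].
  exact: (S2_1_absorbing P_policy p1 (comm_class_connect C_comm pC qC)).
have [p /andP [pC pD] | C_notDelta] := pickP [pred p | (p \in C) && (p \in S2_Delta S)].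
  right; left; apply/subsetP => q qC.
  exact: S2_Delta_absorbing P_Delta pD (comm_class_connect C_comm pC qC).
have C_avoids_S2_1 q : q \in C -> q \notin S2_1 ell.
  by move=> qC; move: (C_notS2_1 q); rewrite /= qC => /negbT.
right; right => p pC; split.
  by move: (C_notDelta p); rewrite /= pC inE => /negbT.
exact: (closed_set_bisimilar tau_LMC P_policy C_closed C_avoids_S2_1 p pC).
Qed.
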